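(* Let $\mathcal{L}_{\rm TM}$ be the Thue–Morse language and let ${\rm S}:\mathcal{L}_{\rm TM}\to\mathbb{N}$ be a homomorphism with $\gcd({\rm S}(a),{\rm S}(b))=1$. Then $\mathbb{N}\setminus{\rm S}(\mathcal{L}_{\rm TM})$ is infinite if and only if ${\rm S}(a)+{\rm S}(b)\ge6$. If ${\rm S}(a)+{\rm S}(b)<6$, then $\mathbb{N}\setminus{\rm S}(\mathcal{L}_{\rm TM})$ is either empty or a singleton.
   Context: $\mathbb{N}=\{1,2,3,\dots\}$. Let $\theta$ be the Thue–Morse morphism on $\{a,b\}$, $\theta(a)=ab$, $\theta(b)=ba$. The Thue–Morse language $\mathcal{L}_{\rm TM}$ is the set of all nonempty finite words occurring as factors of $\theta^n(a)$ for some $n\ge0$. A homomorphism ${\rm S}:\mathcal{L}_{\rm TM}\to\mathbb{N}$ is a map with ${\rm S}(w_1\cdots w_n)={\rm S}(w_1)+\cdots+{\rm S}(w_n)$, determined by ${\rm S}(a),{\rm S}(b)\in\mathbb{N}$. *)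

From mathcomp Require Import all_boot.
Set Implicit Arguments. Unset Strict Implicit. Unset Printing Implicit Defensive.

Definition letter_a : bool := false.
Definition letter_b : bool := true.

Definition tm_theta (w : seq bool) : seq bool :=
  flatten [seq [:: x; ~~ x] | x <- w].

Definition in_TM (w : seq bool) : Prop :=
  w != [::] /\ exists n : nat, infix w (iter n tm_theta [:: letter_a]).

Definition hom_S (sa sb : nat) (w : seq bool) : nat :=
  sumn [seq (if x then sb else sa) | x <- w].

Definition in_image (sa sb : nat) (n : nat) : Prop :=
  exists w, in_TM w /\ hom_S sa sb w = n.

Definition complement_infinite (sa sb : nat) : Prop :=
  forall m : nat, exists n, m < n /\ ~ in_image sa sb n.

Definition complement_at_most_one (sa sb : nat) : Prop :=
  forall n1 n2 : nat, 0 < n1 -> 0 < n2 ->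
    ~ in_image sa sb n1 -> ~ in_image sa sb n2 -> n1 = n2.

From mathcomp Require Import all_boot zify.
Set Implicit Arguments. Unset Strict Implicit. Unset Printing Implicit Defensive.

(* Every Thue-Morse factor is [u ++ tm_theta v ++ u'] with [|u|, |u'| <= 1].
   Conversely, since [tm i] and [tm (i + d)] take all four pairs of values for
   every [d > 0], the word [x :: tm_theta v ++ [:: y]] occurs for all letters
   [x], [y] and every length of [v], hence so do its trimmings.  As
   [S(tm_theta v) = |v| (S(a) + S(b))], the image [S(L_TM)] consists of the
   positive [n >= S(u u')] with [n = S(u u') mod S(a) + S(b)].  These border
   weights fall into the five classes of [0, S(a), S(b), 2 S(a), 2 S(b)], so a
   whole residue class is missed once [S(a) + S(b) >= 6]; for the coprime
   pairs with [S(a) + S(b) < 6] the gaps are found by a finite computation. *)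

(* [tm n] is the [n]-th letter of the Thue-Morse word, the parity of the
   binary digit sum of [n]; fuel [n] suffices since halving decreases [n]. *)
Fixpoint tm_fuel (fuel n : nat) : bool :=
  if fuel is f.+1 then (if n is 0 then false else odd n (+) tm_fuel f n./2) else false.

Definition tm (n : nat) : bool := tm_fuel n n.

Lemma tm_fuel_stable f g n : n <= f -> n <= g -> tm_fuel f n = tm_fuel g n.
Proof.
elim: f g n => [|f IH] [|g] [|n] //= le_nf le_ng.
by rewrite (IH g) //; lia.
Qed.

Lemma tm_half n : tm n = odd n (+) tm n./2.
Proof.
case: n => [//|n]; rewrite {1}/tm /=.
by congr (_ (+) _); apply: tm_fuel_stable; rewrite ?uphalfE; lia.
Qed.

Lemma tm_bit_double (b : bool) n : tm (b + n.*2) = b (+) tm n.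
Proof. by rewrite tm_half oddD odd_double addbF half_bit_double oddb. Qed.

Lemma tm_double n : tm n.*2 = tm n.
Proof. exact: tm_bit_double false n. Qed.

Lemma tm_double1 n : tm n.*2.+1 = ~~ tm n.
Proof. exact: tm_bit_double true n. Qed.

Lemma tm_two_points d x y : 0 < d -> exists i, tm i = x /\ tm (i + d) = y.
Proof.
elim/ltn_ind: d x y => d IH x y d_gt0.
have [d_le1 | d_gt1] := leqP d 1.
  have -> : d = 1 by lia.
  by case: x; case: y; [exists 1 | exists 2 | exists 0 | exists 5].
have [i [tm_i tm_id]] := IH d./2 ltac:(lia) x (odd d (+) y) ltac:(lia).
exists i.*2; rewrite tm_double tm_i; split=> //.
have -> : i.*2 + d = odd d + (i + d./2).*2 by rewrite doubleD; lia.
by rewrite tm_bit_double tm_id addKb.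
Qed.

Definition tm_factor (i L : nat) : seq bool := [seq tm k | k <- iota i L].

Lemma tm_factor_cat i L1 L2 :
  tm_factor i (L1 + L2) = tm_factor i L1 ++ tm_factor (i + L1) L2.
Proof. by rewrite /tm_factor iotaD map_cat. Qed.

Lemma size_tm_factor i L : size (tm_factor i L) = L.
Proof. by rewrite size_map size_iota. Qed.

Lemma tm_theta_cat w1 w2 : tm_theta (w1 ++ w2) = tm_theta w1 ++ tm_theta w2.
Proof. by rewrite /tm_theta map_cat flatten_cat. Qed.

Lemma tm_theta_factor i L : tm_theta (tm_factor i L) = tm_factor i.*2 L.*2.
Proof.
elim: L => [//|L IH].
rewrite -addn1 tm_factor_cat tm_theta_cat IH doubleD tm_factor_cat -doubleD.
by rewrite /tm_factor /tm_theta /= tm_double tm_double1.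
Qed.

Lemma iter_tm_theta m : iter m tm_theta [:: letter_a] = tm_factor 0 (2 ^ m).
Proof. by elim: m => [//|m IH]; rewrite iterS IH tm_theta_factor expnS mul2n. Qed.

Lemma in_TM_factor w : in_TM w <-> exists i L, w = tm_factor i L.+1.
Proof.
split=> [[w_neq0 [m]] | [i [L ->]]].
  rewrite iter_tm_theta => /infixP [p [q E]].
  case: w w_neq0 E => [//|x w] _ E; exists (size p), (size w).
  have := congr1 (take (size w).+1 \o drop (size p)) E.
  rewrite /= drop_size_cat // -cat_cons take_size_cat // => <-.
  rewrite /tm_factor -map_drop -map_take drop_iota take_iota add0n.
  have := congr1 size E; rewrite size_tm_factor !size_cat /= => size_E.
  by rewrite (_ : minn _ _ = (size w).+1) //; lia.
split=> //; exists (i + L.+1); rewrite iter_tm_theta.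
apply/infixP; exists (tm_factor 0 i).
exists (tm_factor (i + L.+1) (2 ^ (i + L.+1) - (i + L.+1))).
have := ltn_expl (i + L.+1) (ltnSn 1).
by rewrite /tm_factor -!map_cat -!iotaD => ?; congr (map _ (iota _ _)); lia.
Qed.

Lemma in_TM_infix w w' : infix w w' -> w != [::] -> in_TM w' -> in_TM w.
Proof.
by move=> ww' w_neq0 [_ [m w'm]]; split=> //; exists m; apply: infix_trans w'm.
Qed.

Lemma tm_factor_double i L :
  tm_factor i.*2 L = tm_theta (tm_factor i L./2) ++ tm_factor (i + L./2).*2 (odd L).
Proof.
by rewrite -{1}(odd_double_half L) (addnC (odd L)) tm_factor_cat tm_theta_factor doubleD.
Qed.

Lemma in_TM_desubst w : in_TM w ->
  exists u v u', [/\ size u <= 1, size u' <= 1 & w = u ++ tm_theta v ++ u'].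
Proof.
move=> /in_TM_factor [i [L ->]].
set L' := L.+1 - odd i.
exists (tm_factor i (odd i)), (tm_factor (uphalf i) L'./2),
  (tm_factor (uphalf i + L'./2).*2 (odd L')).
rewrite !size_tm_factor !leq_b1 -tm_factor_double; split=> //.
have -> : (uphalf i).*2 = i + odd i by rewrite uphalfE; lia.
by rewrite -tm_factor_cat subnKC // (leq_trans (leq_b1 _)).
Qed.

Lemma in_TM_border x y k : exists v, size v = k /\ in_TM (x :: tm_theta v ++ [:: y]).
Proof.
have [i [tm_i tm_ik]] := tm_two_points (~~ x) y (ltn0Sn k).
exists (tm_factor i.+1 k); split; first exact: size_tm_factor.
apply/in_TM_factor; exists i.*2.+1, k.*2.+1.
have -> : k.*2.+2 = 1 + (k.*2 + 1) by lia.
rewrite !tm_factor_cat tm_theta_factor.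
have -> : i.*2.+1 + 1 = i.+1.*2 by rewrite addn1.
have -> : i.+1.*2 + k.*2 = (i + k.+1).*2 by rewrite -doubleD addSnnS.
by rewrite /tm_factor /= tm_double1 tm_double tm_i tm_ik negbK.
Qed.

Lemma infix_border (T : eqType) (x y : T) u m u' : size u <= 1 -> size u' <= 1 ->
  infix (u ++ m ++ u') (head x u :: m ++ [:: head y u']).
Proof.
case: u => [|a [|]] // _; case: u' => [|b [|]] // _; rewrite ?cats0.
- exact: (infix_infix [:: x] m [:: y]).
- exact: infix_cons.
- exact: (prefix_infix (a :: m) [:: y]).
- exact: infix_refl.
Qed.

Section Weights.

Variables sa sb : nat.

Lemma hom_S_cat w1 w2 : hom_S sa sb (w1 ++ w2) = hom_S sa sb w1 + hom_S sa sb w2.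
Proof. by rewrite /hom_S map_cat sumn_cat. Qed.

Lemma hom_S_theta w : hom_S sa sb (tm_theta w) = size w * (sa + sb).
Proof.
elim: w => [//|x w IH]; rewrite /= mulSn -IH.
by case: x; rewrite /hom_S /tm_theta /=; lia.
Qed.

Definition short_words : seq (seq bool) := [:: [::]; [:: false]; [:: true]].

Lemma mem_short_words u : (u \in short_words) = (size u <= 1).
Proof. by case: u => [|[] [|]]. Qed.

Definition border_weights : seq nat :=
  [seq hom_S sa sb (u ++ u') | u <- short_words, u' <- short_words].

Definition has_border_form n : bool :=
  has (fun c => (c <= n) && (n == c %[mod sa + sb])) border_weights.

Lemma border_form_of_image n : in_image sa sb n -> has_border_form n.
Proof.
case=> w [/in_TM_desubst [u [v [u' [su su' ->]]]] <-].
apply/hasP; exists (hom_S sa sb (u ++ u')).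
  by apply: (allpairs_f (fun u u' => hom_S sa sb (u ++ u'))); rewrite mem_short_words.
by rewrite !hom_S_cat hom_S_theta addnCA leq_addl modnMDl eqxx.
Qed.

Lemma image_of_border_form n : 0 < n -> has_border_form n -> in_image sa sb n.
Proof.
move=> n_gt0 /hasP [_ /allpairsP [[u u'] [/= su su' ->]] /andP [le_c_n]].
rewrite eqn_mod_dvd // => /divnK; set k := _ %/ _ => k_eq.
rewrite !mem_short_words in su su'.
have [v [size_v tm_v]] := in_TM_border (head false u) (head false u') k.
have hom_w : hom_S sa sb (u ++ tm_theta v ++ u') = n.
  by rewrite !hom_S_cat hom_S_theta size_v addnCA k_eq -hom_S_cat subnK.
exists (u ++ tm_theta v ++ u'); split=> //.
apply: in_TM_infix tm_v; first exact: infix_border.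
by apply: contraTneq n_gt0 => w0; rewrite -hom_w w0.
Qed.

Lemma border_weights_mod c : c \in border_weights ->
  c %% (sa + sb) \in [seq d %% (sa + sb) | d <- [:: sa + sb; sa; sb; sa.*2; sb.*2]].
Proof.
case/allpairsP => [[u u'] [/= + + ->]]; rewrite !inE.
case/or3P=> /eqP-> /or3P[]/eqP->;
  rewrite /hom_S /= ?addn0 ?addnn ?(addnC sb sa) ?eqxx ?orbT //.
by rewrite modnn mod0n eqxx.
Qed.

Lemma complement_infinite_large : 6 <= sa + sb -> complement_infinite sa sb.
Proof.
move=> s_ge6 m.
pose residues := [seq d %% (sa + sb) | d <- [:: sa + sb; sa; sb; sa.*2; sb.*2]].
have /allPn [r] : ~~ all (fun r => r \in residues) (iota 0 (sa + sb)).
  apply: contraTN s_ge6 => /allP sub; rewrite -ltnNge ltnS.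
  by have := uniq_leq_size (iota_uniq 0 (sa + sb)) sub; rewrite size_iota.
rewrite mem_iota add0n => /andP [_ r_lt] r_notin.
exists (m.+1 * (sa + sb) + r); split; first by nia.
move=> /border_form_of_image /hasP [c /border_weights_mod c_res /andP [_]].
by rewrite modnMDl modn_small // => /eqP r_eq; rewrite /residues r_eq c_res in r_notin.
Qed.

Lemma has_border_form_addn n : has_border_form n -> has_border_form (n + (sa + sb)).
Proof.
move=> /hasP [c c_in /andP [le_cn eq_n]]; apply/hasP; exists c => //.
by rewrite modnDr eq_n andbT (leq_trans le_cn) ?leq_addr.
Qed.

Lemma has_border_form_window N0 : 0 < sa + sb ->
  all (fun n => (n == N0) || has_border_form n) (iota 1 (N0 + (sa + sb))) ->
  forall n, 0 < n -> n != N0 -> has_border_form n.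
Proof.
move=> s_gt0 /allP window n; elim/ltn_ind: n => n IH n_gt0 n_neq.
have [n_le | n_gt] := leqP n (N0 + (sa + sb)).
  by move: (window n); rewrite mem_iota (negbTE n_neq); apply; lia.
have := IH (n - (sa + sb)) ltac:(lia) ltac:(lia) ltac:(lia).
by move/has_border_form_addn; rewrite subnK //; lia.
Qed.

End Weights.

Lemma small_sum_exception sa sb : 0 < sa -> 0 < sb -> gcdn sa sb = 1 -> sa + sb < 6 ->
  exists2 N0, N0 <= 3 & forall n, 0 < n -> n != N0 -> in_image sa sb n.
Proof.
move=> sa_gt0 sb_gt0 coprime_ab s_lt6.
(* The exception is 3 for {1, 4}, 1 for {2, 3} and absent otherwise. *)
suff [N0 N0_le window] : exists2 N0, N0 <= 3 &
    all (fun n => (n == N0) || has_border_form sa sb n) (iota 1 (N0 + (sa + sb))).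
  exists N0 => // n n_gt0 n_neq; apply: image_of_border_form => //.
  exact: has_border_form_window (ltn_addr _ sa_gt0) window n n_gt0 n_neq.
move: sa sb sa_gt0 sb_gt0 coprime_ab s_lt6.
case=> [|[|[|[|[|sa]]]]] [|[|[|[|[|sb]]]]] //= _ _ _ s_lt6; try lia.
all: first [by exists 0 | by exists 1 | by exists 3].
Qed.

Theorem theorem8 (sa sb : nat) :
  0 < sa -> 0 < sb -> gcdn sa sb = 1 ->
  (complement_infinite sa sb <-> 6 <= sa + sb) /\
  (sa + sb < 6 -> complement_at_most_one sa sb).
Proof.
move=> sa_gt0 sb_gt0 coprime_ab.
have small := small_sum_exception sa_gt0 sb_gt0 coprime_ab.
split; [split|].
- move=> infinite; rewrite leqNgt; apply/negP => /small [N0 N0_le cofinite].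
  have [n [n_gt3 gap]] := infinite 3.
  by apply: gap; apply: cofinite; lia.
- exact: complement_infinite_large.
- move=> /small [N0 _ cofinite] n1 n2 n1_gt0 n2_gt0 gap1 gap2.
  have at_N0 n : 0 < n -> ~ in_image sa sb n -> n = N0.
    by move=> n_gt0 gap; case: (eqVneq n N0) => // /(cofinite _ n_gt0).
  by rewrite (at_N0 n1) // (at_N0 n2).
Qed.
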